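(* Let $m \equiv 1 \pmod 4$ with $m > 1$, $n = 3^m - 1$, $v = (3^{(m-1)/2}+1)/2$ and $\delta = (3^{(m-1)/2}+13)/2$. Then $\gcd(v,n) = 1$, and, setting $T_{(0,1,m)}(v) = \{ vi \bmod n : i \in T_{(0,1,m)}\}$, we have $\{n-(\delta-1), \ldots, n-2, n-1\} \subseteq T_{(0,1,m)}(v)$.
   Context: For an integer $0 \le j \le n-1$ with $3$-adic expansion $j = \sum_{t=0}^{m-1} j_t 3^t$, $j_t \in \{0,1,2\}$, let $w_3(j) = \sum_{t=0}^{m-1} j_t$. For distinct $i_1,i_2 \in \{0,1,2,3\}$, $T_{(i_1,i_2,m)} = \{1 \le j \le n-1 : w_3(j) \equiv i_1 \text{ or } i_2 \pmod 4\}$. For an integer $b$, $b \bmod n$ is the unique $b_0 \in \{0,\ldots,n-1\}$ with $b \equiv b_0 \pmod n$. *)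

From mathcomp Require Import all_boot.
Set Implicit Arguments. Unset Strict Implicit. Unset Printing Implicit Defensive.

Definition w3 (m j : nat) : nat := \sum_(t < m) ((j %/ 3 ^ t) %% 3).

Definition T (i1 i2 m : nat) : pred nat :=
  fun j => (1 <= j <= (3 ^ m - 1) - 1) &&
           ((w3 m j %% 4 == i1) || (w3 m j %% 4 == i2)).

From mathcomp Require Import all_boot.
From mathcomp Require Import zify.

(* Write m = 2h + 1 with h even, so that 3^h = 4e + 1, v = 2e + 1, delta = 2e + 7 and
   n = 3^(2h+1) - 1 = 48e^2 + 24e + 2.  For each 1 <= j <= 2e + 6 we exhibit i with
   v i = -j (mod n), written in base 3 as i = a 3^(h+1) + 3b + r with a, b < 3^h and a
   digit r.  Mostly a + b + 1 = 3^h, so a and b have complementary digits and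
   w_3(i) = r + 2h = r (mod 4); the remaining j = 2e + 1, 2e + 3, 2e + 5 (and j = 10
   when m = 5) are settled by small digit computations. *)

Set Implicit Arguments.
Unset Strict Implicit.
Unset Printing Implicit Defensive.

Lemma w3S p j : w3 p.+1 j = j %% 3 + w3 p (j %/ 3).
Proof.
rewrite /w3 big_ord_recl /= expn0 divn1; congr (_ + _).
by apply: eq_bigr => t _; rewrite /bump /= add1n expnS divnMA.
Qed.

Lemma w3_0 p : w3 p 0 = 0.
Proof.
elim: p => [|p IHp]; first by rewrite /w3 big_ord0.
by rewrite w3S div0n IHp.
Qed.

Lemma w3_cat p q x y : y < 3 ^ p -> w3 (p + q) (x * 3 ^ p + y) = w3 p y + w3 q x.
Proof.
elim: p x y => [|p IHp] x y y_lt.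
  have -> : y = 0 by move: y_lt; rewrite expn0; lia.
  by rewrite add0n expn0 muln1 addn0 w3_0.
rewrite addSn !w3S expnS mulnCA.
have -> : (3 * (x * 3 ^ p) + y) %% 3 = y %% 3 by lia.
have -> : (3 * (x * 3 ^ p) + y) %/ 3 = x * 3 ^ p + y %/ 3 by lia.
by rewrite IHp ?addnA //; move: y_lt; rewrite expnS; lia.
Qed.

Lemma w3_widen p q y : y < 3 ^ p -> p <= q -> w3 q y = w3 p y.
Proof.
move=> y_lt /subnKC <-.
by have := @w3_cat p (q - p) 0 y y_lt; rewrite mul0n add0n w3_0 addn0.
Qed.

Lemma w3_lt9 p y : y < 9 -> 2 <= p -> w3 p y = y %% 3 + y %/ 3.
Proof.
move=> y_lt p_ge2; rewrite (@w3_widen 2) // !w3S /w3 big_ord0; lia.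
Qed.

(* Digitwise, [a] and [b] are complementary: their ternary digits sum to 2. *)
Lemma w3_compl p a b : a + b + 1 = 3 ^ p -> w3 p a + w3 p b = 2 * p.
Proof.
elim: p a b => [|p IHp] a b; first by rewrite /w3 !big_ord0.
rewrite expnS !w3S => abp.
have := IHp (a %/ 3) (b %/ 3); lia.
Qed.

Lemma w3_cat_digit p q a b r : b < 3 ^ p -> r < 3 ->
  w3 (p.+1 + q) (a * 3 ^ p.+1 + (3 * b + r)) = r + w3 p b + w3 q a.
Proof.
move=> b_lt r_lt; rewrite w3_cat; last by rewrite expnS; lia.
rewrite w3S.
have -> : (3 * b + r) %% 3 = r by lia.
by have -> : (3 * b + r) %/ 3 = b by lia.
Qed.

Lemma modn_eq_sub a j q n : a + j = q * n -> 0 < j <= n -> a %% n = n - j.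
Proof.
move=> def_a j_bd; case: q def_a => [|q] def_a; first by lia.
have -> : a = q * n + (n - j) by move: def_a; rewrite mulSn; lia.
by rewrite modnMDl modn_small //; lia.
Qed.

Lemma pow3_mod4 h : 2 %| h -> 3 ^ h %% 4 = 1.
Proof. by move=> /dvdnP[k ->]; rewrite mulnC expnM -modnXm exp1n. Qed.

Lemma pow3_odd_pred h e : 3 ^ h = 4 * e + 1 ->
  3 ^ (h.+1 + h) - 1 = 48 * e * e + 24 * e + 2.
Proof. by rewrite expnD expnS => ->; nia. Qed.

Lemma coprime_2e1 e : coprime (2 * e + 1) (48 * e * e + 24 * e + 2).
Proof.
rewrite /coprime (_ : 48 * e * e + 24 * e + 2 = 24 * e * (2 * e + 1) + 2); last by nia.
by rewrite gcdnMDl gcdnC (_ : 2 * e + 1 = e * 2 + 1) ?gcdnMDl //; lia.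
Qed.

Section TopResidues.

Variables h e : nat.
Hypothesis pow3h : 3 ^ h = 4 * e + 1.

Local Notation N := (48 * e * e + 24 * e + 2).
Local Notation v := (2 * e + 1).
Local Notation represented j :=
  (exists2 i, T 0 1 (h.+1 + h) i & (v * i) %% N = N - j).

Lemma represented_of_digits j a b r q :
  b < 4 * e + 1 -> r < 3 ->
  0 < a * (12 * e + 3) + 3 * b + r < N ->
  v * (a * (12 * e + 3) + 3 * b + r) + j = q * N -> 0 < j <= N ->
  (r + w3 h b + w3 h a) %% 4 < 2 ->
  represented j.
Proof.
move=> b_lt r_lt i_bd def_q j_bd w_mod4.
exists (a * (12 * e + 3) + 3 * b + r); last exact: modn_eq_sub def_q j_bd.
have pow3h1 : 3 ^ h.+1 = 12 * e + 3 by rewrite expnS pow3h; lia.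
rewrite /T (pow3_odd_pred pow3h) -addnA -pow3h1 w3_cat_digit ?pow3h //.
apply/andP; split; lia.
Qed.

Hypothesis h_even : 2 %| h.

Lemma represented_even k : 0 < k <= 2 * e -> represented (2 * k).
Proof.
move=> k_bd; have [b def_b] : exists b, b + 2 * k = 4 * e + 1.
  by exists (4 * e + 1 - 2 * k); lia.
(* i = 6k(3^h - 1): then v i = k (3^(2h+1) - 3) = k N - 2k. *)
apply: (@represented_of_digits _ (2 * k - 1) b 0 k); try nia.
have := @w3_compl h (2 * k - 1) b; rewrite pow3h; lia.
Qed.

Lemma represented_odd k : k < e -> represented (2 * k + 1).
Proof.
move=> k_lt; have [b def_b] : exists b, b + 2 * k + 1 = 2 * e.
  by exists (2 * e - 2 * k - 1); lia.
apply: (@represented_of_digits _ (2 * k + 2 * e + 1) b 1 (k + e + 1)); try nia.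
have := @w3_compl h (2 * k + 2 * e + 1) b; rewrite pow3h; lia.
Qed.

Lemma represented_2e1 : represented (2 * e + 1).
Proof.
apply: (@represented_of_digits _ (4 * e) (4 * e) 1 (2 * e + 1)); try nia.
have := @w3_compl h (4 * e) 0; rewrite w3_0 pow3h; lia.
Qed.

Hypothesis e_ge2 : 2 <= e.

Lemma h_ge2 : 2 <= h.
Proof. by rewrite -(@leq_exp2l 3) // pow3h; lia. Qed.

Lemma represented_2e3 : represented (2 * e + 3).
Proof.
apply: (@represented_of_digits _ 1 (4 * e - 2) 2 1); try nia.
have := @w3_compl h 2 (4 * e - 2); rewrite pow3h.
rewrite !(@w3_lt9 h 1) ?(@w3_lt9 h 2) ?h_ge2 //; lia.
Qed.

Lemma represented_2e5 : represented (2 * e + 5).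
Proof.
apply: (@represented_of_digits _ 3 (4 * e - 4) 2 2); try nia.
have := @w3_compl h 4 (4 * e - 4); rewrite pow3h.
rewrite !(@w3_lt9 h 3) ?(@w3_lt9 h 4) ?h_ge2 //; lia.
Qed.

(* For e = 2 the even witness would need b = 4e+1-2k < 0; here h = 2 and n = 242. *)
Lemma represented_10 : e = 2 -> represented 10.
Proof.
move=> e2; have h2 : h = 2 by apply/eqP; rewrite -(@eqn_exp2l 3) // pow3h e2.
by exists 240; rewrite ?e2 // h2 /T !w3S /w3 big_ord0.
Qed.

Lemma represented_top j : 0 < j <= 2 * e + 6 -> represented j.
Proof.
have [k [-> | ->]] : exists k, j = 2 * k \/ j = 2 * k + 1 by exists j./2; lia.
  move=> j_bd; have [/andP[/eqP e2 /eqP ->] | not_10] := boolP ((e == 2) && (k == 5)).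
    exact: represented_10.
  by apply: represented_even; lia.
move=> j_bd; have [k_lt | k_ge] := ltnP k e; first exact: represented_odd.
have [-> | [-> | ->]] : k = e \/ k = e + 1 \/ k = e + 2 by lia.
- exact: represented_2e1.
- have -> : 2 * (e + 1) + 1 = 2 * e + 3 by lia.
  exact: represented_2e3.
- have -> : 2 * (e + 2) + 1 = 2 * e + 5 by lia.
  exact: represented_2e5.
Qed.

End TopResidues.

Theorem lemma5 (m n v delta : nat) :
  m %% 4 = 1 -> 1 < m ->
  n = 3 ^ m - 1 ->
  v = (3 ^ ((m - 1) %/ 2) + 1) %/ 2 ->
  delta = (3 ^ ((m - 1) %/ 2) + 13) %/ 2 ->
  coprime v n /\
  (forall k, n - (delta - 1) <= k <= n - 1 ->
     exists2 i, T 0 1 m i & (v * i) %% n = k).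
Proof.
move=> m_mod4 m_gt1 -> -> ->.
set h := (m - 1) %/ 2.
have h_even : 2 %| h by rewrite /h; lia.
have def_m : m = h.+1 + h by rewrite /h; lia.
have pow3h : 3 ^ h = 4 * (3 ^ h %/ 4) + 1.
  by have := pow3_mod4 h_even; lia.
set e := 3 ^ h %/ 4 in pow3h *.
have e_ge2 : 2 <= e.
  have : 3 ^ 2 <= 3 ^ h by rewrite leq_pexp2l //; rewrite /h; lia.
  by rewrite pow3h; lia.
rewrite pow3h def_m (pow3_odd_pred pow3h).
rewrite (_ : (4 * e + 1 + 1) %/ 2 = 2 * e + 1); last by lia.
split; first exact: coprime_2e1.
move=> k k_bd.
have [|i Ti vi] := @represented_top h e pow3h h_even e_ge2 (48 * e * e + 24 * e + 2 - k).
  by move: k_bd; rewrite (_ : (4 * e + 1 + 13) %/ 2 = 2 * e + 7); lia.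
by exists i => //; rewrite vi; lia.
Qed.
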